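(* Let $X$ and $Y$ be real separated locally convex spaces, $U\subseteq X$ and $V\subseteq Y$ convex sets, and $A:X\to Y$ a linear continuous mapping. Then $$(0,0)\in {}^{ic}\big(U\times V-\Delta_X^A\big)\iff 0\in {}^{ic}\big(V-A(U)\big).$$
   Context: $\Delta_X^A:=\{(x,Ax):x\in X\}\subseteq X\times Y$. For a set $D$ in a real separated locally convex space $E$: $\operatorname{aff}D$ is its affine hull; $\operatorname{icr}D=\{u\in E:\forall x\in\operatorname{aff}(D-D)\ \exists\delta>0\ \forall\lambda\in[0,\delta]:\ u+\lambda x\in D\}$; the intrinsic relative algebraic interior is ${}^{ic}D=\operatorname{icr}D$ if $\operatorname{aff}D$ is closed and ${}^{ic}D=\emptyset$ otherwise. *)

From Stdlib Require Import Reals.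
Open Scope R_scope.

(* Raw data of a real topological vector space: carrier, linear operations,
   and a family of open sets.  Axioms are imposed separately by [is_sep_lcs]. *)
Record TVSdata := {
  car :> Type;
  vzero : car;
  vadd : car -> car -> car;
  vopp : car -> car;
  vscal : R -> car -> car;
  vopen : (car -> Prop) -> Prop
}.

Arguments vzero {t}.
Arguments vadd {t}.
Arguments vopp {t}.
Arguments vscal {t}.
Arguments vopen {t}.

Definition convex {E : TVSdata} (C : E -> Prop) : Prop :=
  forall x y (l : R), C x -> C y -> 0 <= l <= 1 ->
    C (vadd (vscal (1 - l) x) (vscal l y)).

Definition vclosed {E : TVSdata} (C : E -> Prop) : Prop :=
  vopen (fun x => ~ C x).

Definition is_vector_space (E : TVSdata) : Prop :=
  (forall x y z : E, vadd x (vadd y z) = vadd (vadd x y) z) /\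
  (forall x y : E, vadd x y = vadd y x) /\
  (forall x : E, vadd x vzero = x) /\
  (forall x : E, vadd x (vopp x) = vzero) /\
  (forall (a b : R) (x : E), vscal a (vscal b x) = vscal (a * b) x) /\
  (forall x : E, vscal 1 x = x) /\
  (forall (a : R) (x y : E), vscal a (vadd x y) = vadd (vscal a x) (vscal a y)) /\
  (forall (a b : R) (x : E), vscal (a + b) x = vadd (vscal a x) (vscal b x)).

Definition is_topology (E : TVSdata) : Prop :=
  vopen (fun _ : E => True) /\
  (forall A B : E -> Prop, vopen A -> vopen B -> vopen (fun x => A x /\ B x)) /\
  (forall F : (E -> Prop) -> Prop, (forall W, F W -> vopen W) ->
      vopen (fun x => exists W, F W /\ W x)).

Definition add_continuous (E : TVSdata) : Prop :=
  forall (x y : E) (W : E -> Prop), vopen W -> W (vadd x y) ->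
    exists W1 W2 : E -> Prop, vopen W1 /\ W1 x /\ vopen W2 /\ W2 y /\
      forall a b, W1 a -> W2 b -> W (vadd a b).

Definition scal_continuous (E : TVSdata) : Prop :=
  forall (r : R) (x : E) (W : E -> Prop), vopen W -> W (vscal r x) ->
    exists d : R, 0 < d /\ exists W1 : E -> Prop, vopen W1 /\ W1 x /\
      forall (s : R) (z : E), Rabs (s - r) < d -> W1 z -> W (vscal s z).

(* Local convexity: every neighbourhood of 0 contains a convex open neighbourhood of 0
   (with continuous translations this gives a convex local base everywhere). *)
Definition locally_convex (E : TVSdata) : Prop :=
  forall W : E -> Prop, vopen W -> W vzero ->
    exists C : E -> Prop, vopen C /\ convex C /\ C vzero /\ forall x, C x -> W x.

Definition hausdorff (E : TVSdata) : Prop :=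
  forall x y : E, x <> y ->
    exists A B : E -> Prop, vopen A /\ vopen B /\ A x /\ B y /\
      forall z, A z -> B z -> False.

Definition is_sep_lcs (E : TVSdata) : Prop :=
  is_vector_space E /\ is_topology E /\ add_continuous E /\ scal_continuous E /\
  locally_convex E /\ hausdorff E.

Definition linear_continuous {X Y : TVSdata} (A : X -> Y) : Prop :=
  (forall x y : X, A (vadd x y) = vadd (A x) (A y)) /\
  (forall (r : R) (x : X), A (vscal r x) = vscal r (A x)) /\
  (forall W : Y -> Prop, vopen W -> vopen (fun x => W (A x))).

Definition prodT (X Y : TVSdata) : TVSdata := {|
  car := (car X * car Y)%type;
  vzero := (vzero, vzero);
  vadd := fun p q => (vadd (fst p) (fst q), vadd (snd p) (snd q));
  vopp := fun p => (vopp (fst p), vopp (snd p));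
  vscal := fun r p => (vscal r (fst p), vscal r (snd p));
  vopen := fun W => forall p, W p ->
     exists (A : X -> Prop) (B : Y -> Prop), vopen A /\ vopen B /\ A (fst p) /\ B (snd p) /\
       forall a b, A a -> B b -> W (a, b)
|}.

Definition msub {E : TVSdata} (S T : E -> Prop) : E -> Prop :=
  fun z => exists s t, S s /\ T t /\ z = vadd s (vopp t).

Definition setprod {X Y : TVSdata} (U : X -> Prop) (V : Y -> Prop) : prodT X Y -> Prop :=
  fun p => U (fst p) /\ V (snd p).

Definition DeltaA {X Y : TVSdata} (A : X -> Y) : prodT X Y -> Prop :=
  fun p => exists x : X, p = (x, A x).

Definition image {X Y : TVSdata} (A : X -> Y) (U : X -> Prop) : Y -> Prop :=
  fun y => exists x, U x /\ y = A x.

Definition affine_set {E : TVSdata} (S : E -> Prop) : Prop :=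
  forall x y (l : R), S x -> S y -> S (vadd (vscal (1 - l) x) (vscal l y)).

Definition aff {E : TVSdata} (D : E -> Prop) : E -> Prop :=
  fun x => forall S : E -> Prop, affine_set S -> (forall d, D d -> S d) -> S x.

Definition icr {E : TVSdata} (D : E -> Prop) : E -> Prop :=
  fun u => forall x, aff (msub D D) x ->
    exists d : R, 0 < d /\ forall l : R, 0 <= l <= d -> D (vadd u (vscal l x)).

Definition ic {E : TVSdata} (D : E -> Prop) : E -> Prop :=
  fun u => vclosed (aff D) /\ icr D u.

From Stdlib Require Import Reals FunctionalExtensionality PropExtensionality.
Open Scope R_scope.

(* Let D := U x V - Delta_X^A and C := V - A(U).  The map
     psi : X x Y -> Y,   psi (x, y) := y - A x
   is linear and continuous, its kernel is exactly Delta_X^A, and it has the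
   linear continuous section sigma y := (0, y).  Since Delta_X^A = ker psi, the
   set D is the full preimage psi^-1 (C).  For a linear continuous map with a
   linear continuous section, taking preimages commutes with everything that
   enters the definition of the intrinsic relative algebraic interior:
   aff (psi^-1 C) = psi^-1 (aff C), (psi^-1 C) - (psi^-1 C) = psi^-1 (C - C),
   closedness of aff is transported both ways (along psi and along sigma),
   and icr (psi^-1 C) = psi^-1 (icr C).  Hence ic D = psi^-1 (ic C), and the
   theorem is the instance at the point (0, 0), where psi (0, 0) = 0.
   The file first develops elementary vector-space algebra and linear maps,
   then the general transfer lemma [ic_preimage], then the three facts about
   psi and sigma on X x Y, and finally derives [lemma1p1]. *)

Class VectorSpace (E : TVSdata) : Prop := vs_axioms : is_vector_space E.

Section VectorAlgebra.
Context {E : TVSdata} {HE : VectorSpace E}.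

Lemma v_addA (x y z : E) : vadd x (vadd y z) = vadd (vadd x y) z.
Proof. apply HE. Qed.
Lemma v_addC (x y : E) : vadd x y = vadd y x.
Proof. apply HE. Qed.
Lemma v_add0 (x : E) : vadd x vzero = x.
Proof. apply HE. Qed.
Lemma v_addN (x : E) : vadd x (vopp x) = vzero.
Proof. apply HE. Qed.
Lemma v_scal1 (x : E) : vscal 1 x = x.
Proof. apply HE. Qed.
Lemma v_scalDr (a : R) (x y : E) : vscal a (vadd x y) = vadd (vscal a x) (vscal a y).
Proof. apply HE. Qed.
Lemma v_scalDl (a b : R) (x : E) : vscal (a + b) x = vadd (vscal a x) (vscal b x).
Proof. apply HE. Qed.

Lemma v_add0l (x : E) : vadd vzero x = x.
Proof. rewrite v_addC; apply v_add0. Qed.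

Lemma v_cancel0 (a b : E) : vadd a b = a -> b = vzero.
Proof.
  intros H. transitivity (vadd (vadd (vopp a) a) b).
  - rewrite (v_addC (vopp a)), v_addN. symmetry. apply v_add0l.
  - rewrite <- v_addA, H, v_addC. apply v_addN.
Qed.

Lemma v_opp_unique (x y : E) : vadd x y = vzero -> y = vopp x.
Proof.
  intros H. rewrite <- (v_add0 y), <- (v_addN x), v_addA, (v_addC y), H. apply v_add0l.
Qed.

Lemma v_swap (a b c d : E) : vadd (vadd a b) (vadd c d) = vadd (vadd a c) (vadd b d).
Proof. rewrite <- !v_addA. f_equal. rewrite !v_addA. f_equal. apply v_addC. Qed.

Lemma v_opp_add (x y : E) : vopp (vadd x y) = vadd (vopp x) (vopp y).
Proof. symmetry. apply v_opp_unique. rewrite v_swap, !v_addN. apply v_add0. Qed.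

Lemma v_opp0 : vopp (@vzero E) = vzero.
Proof. symmetry. apply v_opp_unique. apply v_add0. Qed.

Lemma v_scal0l (x : E) : vscal 0 x = vzero.
Proof. apply (v_cancel0 (vscal 0 x)). rewrite <- v_scalDl. f_equal. ring. Qed.

Lemma v_scal0r (a : R) : vscal a (@vzero E) = vzero.
Proof. apply (v_cancel0 (vscal a vzero)). rewrite <- v_scalDr. f_equal. apply v_add0. Qed.

Lemma v_scalN (a : R) (x : E) : vscal a (vopp x) = vopp (vscal a x).
Proof. apply v_opp_unique. rewrite <- v_scalDr, v_addN. apply v_scal0r. Qed.

Lemma v_scalN1 (x : E) : vscal (-1) x = vopp x.
Proof.
  apply v_opp_unique. rewrite <- (v_scal1 x) at 1. rewrite <- v_scalDl.
  replace (1 + -1) with 0 by ring. apply v_scal0l.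
Qed.

Lemma v_subK (x y : E) : vadd (vadd x (vopp y)) y = x.
Proof. rewrite <- v_addA, (v_addC (vopp y)), v_addN. apply v_add0. Qed.

Lemma v_sub_sub (x y : E) : vadd x (vopp (vadd x (vopp y))) = y.
Proof.
  rewrite v_opp_add, v_addA, v_addN, v_add0l.
  symmetry. apply v_opp_unique. rewrite v_addC. apply v_addN.
Qed.

Lemma v_sub_eq0 (x y : E) : vadd x (vopp y) = vzero -> x = y.
Proof. intros H. rewrite <- (v_subK x y), H. apply v_add0l. Qed.

Lemma v_comb_shift (l : R) (y1 y2 z : E) :
  vadd (vscal (1 - l) (vadd y1 z)) (vscal l (vadd y2 z))
  = vadd (vadd (vscal (1 - l) y1) (vscal l y2)) z.
Proof.
  rewrite !v_scalDr, v_swap, <- (v_scalDl (1 - l) l).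
  replace (1 - l + l) with 1 by ring. rewrite v_scal1. reflexivity.
Qed.

End VectorAlgebra.

Definition linear {E F : TVSdata} (f : E -> F) : Prop :=
  (forall x y : E, f (vadd x y) = vadd (f x) (f y)) /\
  (forall (r : R) (x : E), f (vscal r x) = vscal r (f x)).

Definition vcontinuous {E F : TVSdata} (f : E -> F) : Prop :=
  forall W : F -> Prop, vopen W -> vopen (fun x => W (f x)).

Section LinearMaps.
Context {E F : TVSdata} {HE : VectorSpace E} {HF : VectorSpace F}.
Variable f : E -> F.
Hypothesis Hf : linear f.

Lemma lin_add (x y : E) : f (vadd x y) = vadd (f x) (f y).
Proof. apply Hf. Qed.

Lemma lin_scal (r : R) (x : E) : f (vscal r x) = vscal r (f x).
Proof. apply Hf. Qed.

Lemma lin0 : f vzero = vzero.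
Proof. rewrite <- (v_scal0l vzero), lin_scal. apply v_scal0l. Qed.

Lemma lin_sub (x y : E) : f (vadd x (vopp y)) = vadd (f x) (vopp (f y)).
Proof. rewrite lin_add, <- v_scalN1, lin_scal, v_scalN1. reflexivity. Qed.

Lemma lin_comb (l : R) (x y : E) :
  f (vadd (vscal (1 - l) x) (vscal l y)) = vadd (vscal (1 - l) (f x)) (vscal l (f y)).
Proof. rewrite lin_add, !lin_scal. reflexivity. Qed.

End LinearMaps.

Lemma aff_incl {E : TVSdata} (D : E -> Prop) d : D d -> aff D d.
Proof. intros Hd S _ HS. auto. Qed.

Lemma aff_affine {E : TVSdata} (D : E -> Prop) : affine_set (aff D).
Proof. intros x y l Hx Hy S HS HD. apply HS; [apply Hx | apply Hy]; auto. Qed.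

Lemma vopen_ext {E : TVSdata} (P Q : E -> Prop) :
  (forall x, P x <-> Q x) -> vopen P -> vopen Q.
Proof.
  intros H HP. replace Q with P; auto.
  apply functional_extensionality; intros x; apply propositional_extensionality; auto.
Qed.

Lemma vclosed_ext {E : TVSdata} (P Q : E -> Prop) :
  (forall x, P x <-> Q x) -> vclosed P -> vclosed Q.
Proof. intros H. apply vopen_ext. intros x. rewrite (H x). tauto. Qed.

Lemma vopen_of_local {E : TVSdata} (HT : is_topology E) (P : E -> Prop) :
  (forall x, P x -> exists W, vopen W /\ W x /\ forall y, W y -> P y) -> vopen P.
Proof.
  intros Hloc.
  apply (vopen_ext (fun x => exists W, (vopen W /\ forall y, W y -> P y) /\ W x)).
  - intros x; split.
    + intros (W & [_ HW] & Wx). auto.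
    + intros Px. destruct (Hloc x Px) as (W & HW & Wx & HWP). eauto.
  - apply HT. intros W [HW _]. exact HW.
Qed.

Lemma vclosed_preimage {E F : TVSdata} (f : E -> F) (C : F -> Prop) :
  vcontinuous f -> vclosed C -> vclosed (fun x => C (f x)).
Proof. intros Hf HC. exact (Hf _ HC). Qed.

Section Preimage.
Context {E F : TVSdata} {HE : VectorSpace E} {HF : VectorSpace F}.
Variables (psi : E -> F) (sigma : F -> E).
Hypothesis Hpsi : linear psi.
Hypothesis Hsigma : linear sigma.
Hypothesis Hsection : forall y, psi (sigma y) = y.

Lemma aff_preimage (D : E -> Prop) (C : F -> Prop) :
  (forall p, D p <-> C (psi p)) -> forall p, aff D p <-> aff C (psi p).
Proof.
  intros HD p; split.
  - intros Hp. apply (Hp (fun q => aff C (psi q))).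
    + intros q1 q2 l H1 H2. rewrite (lin_comb psi Hpsi). apply aff_affine; auto.
    + intros d Hd. apply aff_incl, HD, Hd.
  - (* the translate of sigma (aff C) by p - sigma (psi p) lies in aff D *)
    set (k := vadd p (vopp (sigma (psi p)))).
    assert (Hk : forall c, C c -> D (vadd (sigma c) k)).
    { intros c Hc. apply HD. unfold k.
      rewrite (lin_add psi Hpsi), (lin_sub psi Hpsi), !Hsection, v_addN, v_add0.
      exact Hc. }
    intros Hc.
    assert (Htr : aff D (vadd (sigma (psi p)) k)).
    { apply (Hc (fun c => aff D (vadd (sigma c) k))).
      - intros c1 c2 l H1 H2. rewrite (lin_comb sigma Hsigma), <- v_comb_shift.
        apply aff_affine; auto.
      - intros c Hc'. apply aff_incl, Hk, Hc'. }
    unfold k in Htr. rewrite v_addC, v_subK in Htr. exact Htr.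
Qed.

Lemma msub_preimage (D : E -> Prop) (C : F -> Prop) :
  (forall p, D p <-> C (psi p)) -> forall p, msub D D p <-> msub C C (psi p).
Proof.
  intros HD p; split.
  - intros (s & t & Hs & Ht & ->). exists (psi s), (psi t).
    repeat split; try apply HD; auto. apply (lin_sub psi Hpsi).
  - intros (c1 & c2 & H1 & H2 & Hp).
    exists (vadd p (sigma c2)), (sigma c2). repeat split.
    + apply HD. rewrite (lin_add psi Hpsi), Hsection, Hp, v_subK. exact H1.
    + apply HD. rewrite Hsection. exact H2.
    + symmetry. rewrite <- v_addA, v_addN. apply v_add0.
Qed.

Lemma icr_preimage (D : E -> Prop) (C : F -> Prop) :
  (forall p, D p <-> C (psi p)) -> forall p, icr D p <-> icr C (psi p).
Proof.
  intros HD p.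
  pose proof (aff_preimage _ _ (msub_preimage D C HD)) as Hdir.
  assert (Hline : forall l x, D (vadd p (vscal l x)) <-> C (vadd (psi p) (vscal l (psi x)))).
  { intros l x. rewrite HD, (lin_add psi Hpsi), (lin_scal psi Hpsi). tauto. }
  split.
  - intros Hicr y Hy.
    assert (Hx : aff (msub D D) (sigma y)) by (apply Hdir; rewrite Hsection; exact Hy).
    destruct (Hicr _ Hx) as (d & Hd & Hl). exists d; split; auto.
    intros l Hl'. rewrite <- (Hsection y). apply Hline, Hl, Hl'.
  - intros Hicr x Hx. rewrite Hdir in Hx.
    destruct (Hicr _ Hx) as (d & Hd & Hl). exists d; split; auto.
    intros l Hl'. apply Hline, Hl, Hl'.
Qed.

Lemma ic_preimage (D : E -> Prop) (C : F -> Prop) :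
  vcontinuous psi -> vcontinuous sigma ->
  (forall p, D p <-> C (psi p)) -> forall p, ic D p <-> ic C (psi p).
Proof.
  intros Hpsi_cont Hsigma_cont HD p.
  pose proof (aff_preimage D C HD) as Haff.
  unfold ic. rewrite (icr_preimage D C HD p).
  assert (Hclosed : vclosed (aff D) <-> vclosed (aff C)).
  { split; intros Hcl.
    - apply (vclosed_ext (fun y => aff D (sigma y))).
      + intros y. rewrite Haff, Hsection. tauto.
      + apply vclosed_preimage; assumption.
    - apply (vclosed_ext (fun q => aff C (psi q))).
      + intros q. rewrite Haff. tauto.
      + apply vclosed_preimage; assumption. }
  tauto.
Qed.

End Preimage.

Lemma vopp_continuous {F : TVSdata} {HF : VectorSpace F} :
  is_topology F -> scal_continuous F -> vcontinuous (@vopp F).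
Proof.
  intros HT Hs W HW. apply vopen_of_local; auto. intros z Wz.
  rewrite <- v_scalN1 in Wz.
  destruct (Hs (-1) z W HW Wz) as (d & Hd & W1 & HW1 & W1z & HW1W).
  exists W1; repeat split; auto. intros y Wy. rewrite <- v_scalN1.
  apply HW1W; auto. replace (-1 - -1) with 0 by ring. rewrite Rabs_R0. exact Hd.
Qed.

Lemma prod_vector_space (X Y : TVSdata) :
  VectorSpace X -> VectorSpace Y -> VectorSpace (prodT X Y).
Proof.
  intros HX HY.
  repeat split; intros;
    repeat match goal with p : car (prodT X Y) |- _ => destruct p end;
    simpl; f_equal; apply HX || apply HY.
Qed.

(* psi = [graph_gap A] measures the defect of (x, y) from the graph of A;
   sigma = [yaxis] embeds Y as the second axis of X x Y. *)
Section GraphGap.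
Context {X Y : TVSdata} {HX : VectorSpace X} {HY : VectorSpace Y}.
Variable A : X -> Y.
Hypothesis HA : linear A.

Definition graph_gap (p : prodT X Y) : Y := vadd (snd p) (vopp (A (fst p))).

Definition yaxis (y : Y) : prodT X Y := (vzero, y).

Lemma graph_gap_linear : linear graph_gap.
Proof.
  unfold graph_gap; split; simpl.
  - intros p q. rewrite (lin_add A HA), v_opp_add. apply v_swap.
  - intros r p. rewrite (lin_scal A HA), v_scalDr, v_scalN. reflexivity.
Qed.

Lemma yaxis_linear : linear yaxis.
Proof.
  unfold yaxis; split; simpl.
  - intros y z. rewrite v_add0. reflexivity.
  - intros r y. rewrite v_scal0r. reflexivity.
Qed.

Lemma graph_gap_yaxis (y : Y) : graph_gap (yaxis y) = y.
Proof. unfold graph_gap, yaxis; simpl. rewrite (lin0 A HA), v_opp0. apply v_add0. Qed.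

Lemma graph_gap_kernel (q : prodT X Y) : graph_gap q = vzero <-> DeltaA A q.
Proof.
  destruct q as [x y]. unfold graph_gap; simpl; split.
  - intros H. exists x. f_equal. apply v_sub_eq0, H.
  - intros [x' Hq]. injection Hq as -> ->. apply v_addN.
Qed.

Lemma sub_graph_preimage (S : prodT X Y -> Prop) (p : prodT X Y) :
  msub S (DeltaA A) p <-> exists s, S s /\ graph_gap p = graph_gap s.
Proof.
  pose proof (prod_vector_space X Y HX HY).
  split.
  - intros (s & t & Hs & Ht & ->). exists s; split; auto.
    apply graph_gap_kernel in Ht.
    rewrite (lin_sub _ graph_gap_linear), Ht, v_opp0. apply v_add0.
  - intros (s & Hs & Hp). exists s, (vadd s (vopp p)). repeat split; auto.
    + apply graph_gap_kernel. rewrite (lin_sub _ graph_gap_linear), Hp. apply v_addN.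
    + symmetry. apply v_sub_sub.
Qed.

Lemma graph_gap_setprod (U : X -> Prop) (V : Y -> Prop) (c : Y) :
  (exists s, setprod U V s /\ c = graph_gap s) <-> msub V (image A U) c.
Proof.
  split.
  - intros ([u v] & [Hu Hv] & ->). exists v, (A u). repeat split; auto. exists u; auto.
  - intros (v & w & Hv & (u & Hu & ->) & ->). exists (u, v). split; split; auto.
Qed.

Lemma graph_gap_continuous :
  is_topology Y -> add_continuous Y -> scal_continuous Y -> vcontinuous A ->
  vcontinuous graph_gap.
Proof.
  intros HT Ha Hs HAc W HW [x y] Wp. unfold graph_gap in Wp; simpl in Wp.
  destruct (Ha y (vopp (A x)) W HW Wp) as (W1 & W2 & HW1 & W1y & HW2 & W2x & HW12).
  exists (fun a => W2 (vopp (A a))), W1. repeat split; auto.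
  - apply (HAc (fun z => W2 (vopp z))), (vopp_continuous HT Hs), HW2.
  - intros a b W2a W1b. apply HW12; assumption.
Qed.

Lemma yaxis_continuous : is_topology Y -> vcontinuous yaxis.
Proof.
  intros HT W HW. apply vopen_of_local; auto. intros y Wy.
  destruct (HW (yaxis y) Wy) as (W1 & W2 & HW1 & HW2 & W1x & W2y & HW12).
  exists W2; repeat split; auto. intros z W2z. apply HW12; assumption.
Qed.

End GraphGap.

Theorem lemma1p1 (X Y : TVSdata) (HX : is_sep_lcs X) (HY : is_sep_lcs Y)
  (U : X -> Prop) (V : Y -> Prop) (HU : convex U) (HV : convex V)
  (A : X -> Y) (HA : linear_continuous A) :
  ic (E := prodT X Y) (msub (setprod U V) (DeltaA A)) (vzero, vzero)
  <-> ic (msub V (image A U)) vzero.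
Proof.
  destruct HX as (HXv & _).
  destruct HY as (HYv & HYt & HYa & HYs & _).
  destruct HA as (HAadd & HAscal & HAcont).
  assert (HXvs : VectorSpace X) by exact HXv.
  assert (HYvs : VectorSpace Y) by exact HYv.
  assert (HPvs := prod_vector_space X Y HXvs HYvs).
  assert (Hlin : linear A) by (split; assumption).
  assert (HD : forall p, msub (setprod U V) (DeltaA A) p
                    <-> msub V (image A U) (graph_gap A p)).
  { intros p. rewrite sub_graph_preimage, <- graph_gap_setprod by exact Hlin.
    reflexivity. }
  pose proof (ic_preimage (graph_gap A) yaxis (graph_gap_linear A Hlin) yaxis_linear
                (graph_gap_yaxis A Hlin) _ _ (graph_gap_continuous A HYt HYa HYs HAcont)
                (yaxis_continuous HYt) HD (vzero, vzero)) as Hic.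
  assert (Hzero : graph_gap A (vzero, vzero) = vzero)
    by exact (lin0 _ (graph_gap_linear A Hlin)).
  rewrite Hzero in Hic. exact Hic.
Qed.
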